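(* Let $G$ be an oriented graph on $[n]$ with $|\mathcal{P}(G)|\ge 1$. Then \[\max_{\sigma,\rho\in\mathcal{P}(G)} d_\ell(\sigma,\rho)\le \max_{1\le i\le n}\{\,n-|R(i)|-|R^{-1}(i)|-1\,\}.\]
   Context: Write a permutation $\sigma\in S_n$ as $\sigma=\sigma_1\cdots\sigma_n$. A permutation $\sigma$ satisfies an oriented graph $G=([n],E)$ if $\sigma_u>\sigma_v$ for every oriented edge $u\to v\in E$; $\mathcal{P}(G)$ is the set of permutations satisfying $G$. Write $u\rightsquigarrow v$ if there is an oriented path from $u$ to $v$ in $G$. For a vertex $v$, $R(v)=\{u\in[n]\setminus\{v\}: v\rightsquigarrow u\}$ and $R^{-1}(v)=\{u\in[n]\setminus\{v\}: u\rightsquigarrow v\}$. The $\ell_\infty$-metric is $d_\ell(\sigma,\rho)=\max_{1\le i\le n}|\sigma_i-\rho_i|$. *)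

From mathcomp Require Import all_boot all_order all_algebra all_fingroup.
Set Implicit Arguments. Unset Strict Implicit. Unset Printing Implicit Defensive.

(* Vertices [n] are represented by 'I_n (vertex i+1 <-> ordinal i);
   a permutation sigma in S_n by s : {perm 'I_n}, sigma_i <-> s i (values shifted
   by one, which does not affect differences or comparisons). *)

Definition oriented_graph n (E : rel 'I_n) : Prop :=
  (forall u, ~~ E u u) /\ (forall u v, E u v -> ~~ E v u).

Definition satisfies n (E : rel 'I_n) (s : {perm 'I_n}) : Prop :=
  forall u v, E u v -> (s v < s u)%N.

Definition reach n (E : rel 'I_n) (v : 'I_n) : {set 'I_n} :=
  [set u | (u != v) && connect E v u].
Definition reach_inv n (E : rel 'I_n) (v : 'I_n) : {set 'I_n} :=
  [set u | (u != v) && connect E u v].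

(* l_infinity distance: max_i |s_i - r_i| (written max - min on nat). *)
Definition dl n (s r : {perm 'I_n}) : nat :=
  \max_(i < n) (maxn (s i) (r i) - minn (s i) (r i))%N.

From mathcomp Require Import all_boot all_order all_algebra all_fingroup.
From mathcomp Require Import zify.
Set Implicit Arguments. Unset Strict Implicit.

(* Every satisfying permutation decreases strictly along oriented paths, so it
   sends the |R(i)| vertices reachable from i to values below sigma_i and the
   |R^-1(i)| vertices reaching i to values above it.  Hence sigma_i lies in a
   window of n - |R(i)| - |R^-1(i)| positions that does not depend on sigma,
   and two satisfying permutations differ at i by less than its length. *)

Section DecreasingAlongEdges.

Variables (T : finType) (e : rel T) (f : T -> nat).
Hypothesis f_decr : forall u v, e u v -> f v < f u.

Lemma path_last_ltn x p : path e x p -> last x p != x -> f (last x p) < f x.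
Proof.
move=> e_p; have f_p : path [rel u v | f v < f u] x p by apply: sub_path e_p.
have lt_trans : transitive [rel u v | f v < f u].
  by move=> b a c /= ba cb; apply: ltn_trans cb ba.
have /allP lt_p := order_path_min lt_trans f_p.
by have := mem_last x p; rewrite inE => /predU1P [-> /eqP //| /lt_p].
Qed.

Lemma connect_ltn u v : connect e u v -> v != u -> f v < f u.
Proof. by case/connectP=> p e_p ->; apply: path_last_ltn. Qed.

End DecreasingAlongEdges.

Lemma card_ord_between n (A : {set 'I_n}) a b :
  {in A, forall k : 'I_n, a <= k < b} -> #|A| <= b - a.
Proof.
move=> A_ab; rewrite cardE -(size_map val) -(size_iota a (b - a)).
apply: uniq_leq_size; first by rewrite (map_inj_uniq val_inj) enum_uniq.
move=> x /mapP [k]; rewrite mem_enum => /A_ab k_ab ->.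
by rewrite mem_iota /=; move: k_ab; lia.
Qed.

Section SatisfyingPermutation.

Variables (n : nat) (E : rel 'I_n) (s : {perm 'I_n}).
Hypothesis sat_s : satisfies E s.

Lemma card_reach_le i : #|reach E i| <= s i.
Proof.
rewrite -(card_imset _ (@perm_inj _ s)) -[X in _ <= X]subn0.
apply: card_ord_between => k /imsetP [u]; rewrite inE => /andP [u_ne_i i_to_u] ->.
exact: (connect_ltn sat_s i_to_u u_ne_i).
Qed.

Lemma card_reach_inv_le i : #|reach_inv E i| <= n - (s i).+1.
Proof.
rewrite -(card_imset _ (@perm_inj _ s)).
apply: card_ord_between => k /imsetP [u]; rewrite inE => /andP [u_ne_i u_to_i] ->.
by rewrite (connect_ltn sat_s u_to_i) 1?eq_sym // ltn_ord.
Qed.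

End SatisfyingPermutation.

Theorem mainTheorem3 (n : nat) (E : rel 'I_n) :
  oriented_graph E ->
  (exists s : {perm 'I_n}, satisfies E s) ->
  forall s r : {perm 'I_n}, satisfies E s -> satisfies E r ->
  (dl s r <= \max_(i < n) (n - #|reach E i| - #|reach_inv E i| - 1))%N.
Proof.
move=> _ _ s r sat_s sat_r; apply/bigmax_leqP => i _.
apply: leq_trans (leq_bigmax i) => /=.
have := card_reach_le sat_s i; have := card_reach_le sat_r i.
have := card_reach_inv_le sat_s i; have := card_reach_inv_le sat_r i.
have := ltn_ord (s i); have := ltn_ord (r i).
by move: #|reach E i| #|reach_inv E i|; lia.
Qed.
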